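(* Let $(\Omega,\Sigma,\mu)$ be a finite measure space and let $X(\mu)\subseteq L^0(\mu)$ be a Riesz space (i.e. a vector subspace with $\max\{f,g\}\in X(\mu)$ for all $f,g\in X(\mu)$) equipped with a norm. Let $V:X(\mu)\to X(\mu)$, $V(f)=|f|$. (i) If $V$ is continuous, then the positive cone $X(\mu)^+=\{f\in X(\mu): f\ge 0\ \mu\text{-a.e.}\}$ is closed in $X(\mu)$. (ii) If $X(\mu)$ has the subsequence property, then $X(\mu)^+$ is closed in $X(\mu)$.
   Context: $L^0(\mu)$ is the space of equivalence classes (modulo $\mu$-a.e. equality) of real $\Sigma$-measurable functions on $\Omega$, with the order $f\le g$ iff $f\le g$ $\mu$-a.e. A normed space $X(\mu)\subseteq L^0(\mu)$ has the subsequence property if whenever $f_n,f\in X(\mu)$ and $f_n\to f$ in norm, some subsequence $f_{n(k)}$ converges to $f$ pointwise $\mu$-a.e. *)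

From HB Require Import structures.
From mathcomp Require Import all_boot all_order all_algebra.
From mathcomp Require Import all_classical all_reals all_analysis.
Set Implicit Arguments. Unset Strict Implicit. Unset Printing Implicit Defensive.
Import Order.TTheory GRing.Theory Num.Theory.
Local Open Scope classical_set_scope.
Local Open Scope ring_scope.

(* Model of X(mu) ⊆ L^0(mu): a set X of real Sigma-measurable functions
   (representatives), with a norm N that is a seminorm on representatives
   vanishing exactly on mu-a.e. null functions (i.e. a norm on the classes). *)

Section Defs.
Context (d : measure_display) (T : measurableType d) (R : realType).
Context (mu : {measure set T -> \bar R}).

Definition riesz_subspace (X : set (T -> R)) : Prop :=
  [/\ (forall f, X f -> measurable_fun setT f),
      X (fun _ => 0),
      (forall f g, X f -> X g -> X (f \+ g)),
      (forall (a : R) f, X f -> X (fun x => a * f x)) &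
      (forall f g, X f -> X g -> X (fun x => Num.max (f x) (g x)))].

Definition norm_on (X : set (T -> R)) (N : (T -> R) -> R) : Prop :=
  [/\ (forall f g, X f -> X g -> N (f \+ g) <= N f + N g),
      (forall (a : R) f, X f -> N (fun x => a * f x) = `|a| * N f) &
      (forall f, X f -> (N f = 0 <-> {ae mu, forall x, f x = 0}))].

Definition pos_cone (X : set (T -> R)) : set (T -> R) :=
  [set f | X f /\ {ae mu, forall x, 0 <= f x}].

Definition closed_in (X : set (T -> R)) (N : (T -> R) -> R) (A : set (T -> R)) :=
  forall f, X f ->
    (forall e : R, 0 < e -> exists2 g, A g & N (g \- f) < e) -> A f.

Definition abs_continuous (X : set (T -> R)) (N : (T -> R) -> R) :=
  forall f, X f -> forall e : R, 0 < e -> exists2 delta : R, 0 < delta &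
    forall g, X g -> N (g \- f) < delta ->
      N ((fun x => `|g x|) \- (fun x => `|f x|)) < e.

Definition subsequence_property (X : set (T -> R)) (N : (T -> R) -> R) :=
  forall (fn : nat -> T -> R) (f : T -> R),
    (forall n, X (fn n)) -> X f ->
    (fun n => N (fn n \- f)) @ \oo --> (0 : R^o) ->
    exists phi : nat -> nat, {homo phi : m n / (m < n)%N} /\
      {ae mu, forall x, (fun k => fn (phi k) x) @ \oo --> (f x : R^o)}.

End Defs.

From mathcomp Require Import all_boot all_order all_algebra.
From mathcomp Require Import all_classical all_reals all_analysis.
Set Implicit Arguments. Unset Strict Implicit.
Import Order.TTheory GRing.Theory Num.Theory.
Import numFieldNormedType.Exports.
Local Open Scope classical_set_scope.
Local Open Scope ring_scope.

(** (i) f lies in the cone iff N(|f| - f) = 0, since N vanishes exactly on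
    a.e.-null functions.  For g in the cone |g| = g a.e., hence
    N(|f| - f) <= N(|f| - |g|) + N(g - f), and continuity of f |-> |f| makes
    both terms small when g approximates f.  (ii) Nonnegative g_n -> f in norm
    have a subsequence converging a.e. to f, and pointwise limits of
    nonnegative reals are nonnegative. *)

Section PositiveCone.
Context (d : measure_display) (T : measurableType d) (R : realType).
Context (mu : {measure set T -> \bar R}).
Context (X : set (T -> R)) (N : (T -> R) -> R).
Hypothesis HX : riesz_subspace X.
Hypothesis HN : norm_on mu X N.

Local Notation absf f := (fun x => `|f x|).

Lemma rieszN f : X f -> X (fun x => - f x).
Proof.
case: HX => _ _ _ XZ _ Xf.
rewrite (_ : (fun x => - f x) = (fun x => -1 * f x)); first exact: XZ.
by apply/funext => x; rewrite mulN1r.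
Qed.

Lemma rieszB f g : X f -> X g -> X (f \- g).
Proof. by case: HX => _ _ XD _ _ Xf Xg; apply: XD => //; apply: rieszN. Qed.

Lemma riesz_abs f : X f -> X (absf f).
Proof.
case: HX => _ _ _ _ Xmax Xf.
rewrite (_ : absf f = (fun x => Num.max (f x) (- f x))).
  by apply: Xmax => //; apply: rieszN.
by apply/funext => x; rewrite maxrN.
Qed.

Lemma norm_onN f : X f -> N (fun x => - f x) = N f.
Proof.
case: HN => _ NZ _ Xf.
rewrite (_ : (fun x => - f x) = (fun x => -1 * f x)).
  by rewrite NZ // normrN normr1 mul1r.
by apply/funext => x; rewrite mulN1r.
Qed.

Lemma norm_on_distC f g : X f -> X g -> N (f \- g) = N (g \- f).
Proof.
move=> Xf Xg; rewrite -norm_onN; last exact: rieszB.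
by congr N; apply/funext => x /=; rewrite opprB.
Qed.

Lemma norm_on_dist_triangle f g h : X f -> X g -> X h ->
  N (f \- h) <= N (f \- g) + N (g \- h).
Proof.
case: HN => ND _ _ Xf Xg Xh.
rewrite (_ : f \- h = (f \- g) \+ (g \- h)).
  by apply: ND; apply: rieszB.
by apply/funext => x /=; rewrite addrA subrK.
Qed.

Lemma norm_on_eq0 f : X f -> (N f = 0 <-> {ae mu, forall x, f x = 0}).
Proof. by case: HN => _ _ N0; apply: N0. Qed.

Lemma norm_on_ge0 f : X f -> 0 <= N f.
Proof.
move=> Xf.
have Nff : N (f \- f) = 0.
  by apply/norm_on_eq0; [exact: rieszB | apply: aeW => x /=; rewrite subrr].
have : N (f \- f) <= N f + N (fun x => - f x).
  by case: HN => ND _ _; apply: ND => //; apply: rieszN.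
by rewrite Nff norm_onN // -mulr2n pmulrn_lge0.
Qed.

Lemma pos_cone_norm_abs_sub_eq0 f :
  X f -> N (absf f \- f) = 0 -> pos_cone mu X f.
Proof.
move=> Xf /norm_on_eq0 fabs; split => //.
apply: filterS (fabs (rieszB (riesz_abs Xf) Xf)) => x /= /eqP.
by rewrite subr_eq0 => /eqP <-.
Qed.

Lemma norm_abs_sub_le_pos_cone f g : X f -> pos_cone mu X g ->
  N (absf f \- f) <= N (absf g \- absf f) + N (g \- f).
Proof.
move=> Xf [Xg g_ge0].
have [Xaf Xag] := (riesz_abs Xf, riesz_abs Xg).
have Nabsg : N (absf g \- g) = 0.
  apply/norm_on_eq0; first exact: rieszB.
  by apply: filterS g_ge0 => x /= gx; rewrite ger0_norm // subrr.
rewrite (norm_on_distC Xag Xaf).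
apply: le_trans (norm_on_dist_triangle Xaf Xag Xf) _; rewrite lerD2l.
by apply: le_trans (norm_on_dist_triangle Xag Xg Xf) _; rewrite Nabsg add0r.
Qed.

Lemma abs_continuous_closed_pos_cone :
  abs_continuous X N -> closed_in X N (pos_cone mu X).
Proof.
move=> Vcont f Xf f_adh; apply: pos_cone_norm_abs_sub_eq0 => //.
apply/eqP; rewrite eq_le norm_on_ge0 ?andbT; last exact/rieszB/Xf/riesz_abs.
apply/ler_addgt0Pr => e e_gt0; rewrite add0r.
have e2_gt0 : 0 < e / 2 by rewrite divr_gt0.
have [delta delta_gt0 Vdelta] := Vcont f Xf _ e2_gt0.
have [g cone_g Ngf] : exists2 g, pos_cone mu X g & N (g \- f) < Num.min delta (e / 2).
  by apply: f_adh; rewrite lt_min delta_gt0 e2_gt0.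
move: Ngf; rewrite lt_min => /andP[Ngf_delta Ngf_e].
apply: le_trans (norm_abs_sub_le_pos_cone Xf cone_g) _.
by rewrite [e]splitr ltW // ltrD // Vdelta //; case: cone_g.
Qed.

Definition adherent (A : set (T -> R)) (f : T -> R) :=
  forall e : R, 0 < e -> exists2 g, A g & N (g \- f) < e.

Lemma adherent_cvg_seq (A : set (T -> R)) f : A `<=` X -> X f -> adherent A f ->
  exists g : nat -> T -> R,
    (forall n, A (g n)) /\ (fun n => N (g n \- f)) @ \oo --> (0 : R^o).
Proof.
move=> AX Xf f_adh.
have /choice [g gP] : forall n : nat, exists g, A g /\ N (g \- f) < n.+1%:R^-1.
  by move=> n; apply/exists2P/f_adh; rewrite invr_gt0.
exists g; split => [n|]; first exact: (gP n).1.
apply/cvgrPdist_lt => e e_gt0; near=> n.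
rewrite sub0r normrN ger0_norm; last exact/norm_on_ge0/rieszB/Xf/AX/(gP n).1.
apply: lt_trans (gP n).2 _; near: n.
exact: (near_infty_natSinv_lt (PosNum e_gt0)).
Unshelve. all: by end_near.
Qed.

Lemma ae_ge0_cvg (u : nat -> T -> R) (f : T -> R) :
  (forall n, {ae mu, forall x, 0 <= u n x}) ->
  {ae mu, forall x, (fun n => u n x) @ \oo --> (f x : R^o)} ->
  {ae mu, forall x, 0 <= f x}.
Proof.
move=> u_ge0 u_cvg; apply: filterS2 u_cvg (ae_foralln u_ge0) => x ux_cvg ux_ge0.
by rewrite -(cvg_lim _ ux_cvg) //; apply: limr_ge; [exact: cvgP ux_cvg | exact: nearW].
Qed.

Lemma subsequence_property_closed_pos_cone :
  subsequence_property mu X N -> closed_in X N (pos_cone mu X).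
Proof.
move=> Xsub f Xf f_adh.
have cone_X : pos_cone mu X `<=` X by move=> g [].
have [g [cone_g g_cvg]] := adherent_cvg_seq cone_X Xf f_adh.
have [phi [_ g_phi_cvg]] := Xsub g f (fun n => cone_X _ (cone_g n)) Xf g_cvg.
split => //; apply: (ae_ge0_cvg (u := fun k => g (phi k))) g_phi_cvg => k.
by case: (cone_g (phi k)).
Qed.

End PositiveCone.

Theorem lemma2p2 (d : measure_display) (T : measurableType d) (R : realType)
  (mu : {measure set T -> \bar R}) (mu_fin : (mu setT < +oo)%E)
  (X : set (T -> R)) (N : (T -> R) -> R)
  (HX : riesz_subspace X) (HN : norm_on mu X N) :
  (abs_continuous X N -> closed_in X N (pos_cone mu X)) /\
  (subsequence_property mu X N -> closed_in X N (pos_cone mu X)).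
Proof.
split.
- exact: abs_continuous_closed_pos_cone.
- exact: subsequence_property_closed_pos_cone.
Qed.
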